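(* The exact sequence \[0\to\mathbb Z\to\mathbb Z[\tfrac12]\to\mathbb Z(2^\infty)\to0\] (inclusion followed by the quotient map $\mathbb Z[\tfrac12]\to\mathbb Z[\tfrac12]/\mathbb Z=\mathbb Z(2^\infty)$) is coarsely split. Moreover, the metric $d_{\mathbb Z}$ in the definition of coarse splitting can be chosen to be the standard word metric $d_{\mathbb Z}(a,b)=|a-b|$.
   Context: $\mathbb Z[\tfrac12]=\{m/2^k:m\in\mathbb Z,k\ge0\}$; $\mathbb Z(2^\infty)=\varinjlim(\mathbb Z_2\to\mathbb Z_4\to\cdots)\cong\mathbb Z[\tfrac12]/\mathbb Z$. A proper left invariant metric is $d(g,h)=\|g^{-1}h\|$ for a proper norm ($\|g\|=0$ iff $g$ trivial, symmetric, subadditive, finite balls). An exact sequence $0\to K\overset{i}{\to}G\overset{\pi}{\to}Q\to0$ is coarsely split if there are proper left invariant metrics $d_K,d_G,d_Q$ and a coarse equivalence $f:(G,d_G)\to(K\oplus Q,d_K\oplus d_Q)$ ($\ell_1$ sum metric) with $f\circ i$ at bounded distance from $k\mapsto(k,0)$ and $\pi'\circ f$ at bounded distance from $\pi$, $\pi'$ the projection onto $Q$. Coarse maps: for each $\delta$ there is $\epsilon$ with $d(x,y)\le\delta\Rightarrow d(f x,f y)\le\epsilon$; coarse equivalences are coarse maps with coarse inverses up to bounded distance. *)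

From HB Require Import structures.
From mathcomp Require Import all_boot all_order all_algebra.
From mathcomp Require Import Rstruct.
Set Implicit Arguments. Unset Strict Implicit. Unset Printing Implicit Defensive.
Import Order.TTheory GRing.Theory Num.Theory.
Local Open Scope ring_scope.

(* q is dyadic iff its (reduced) denominator is a power of 2; we test this
   as  denq q | 2^(denq q)  and prove it equivalent to
   "exists k, 2^k * q is an integer" (is_dyadicP). *)
Definition is_dyadic (q : rat) : bool := (`|denq q| %| 2 ^ `|denq q|)%N.

Lemma dyadic_den (q : rat) (k : nat) :
  (2 ^ k)%:R * q \is a Num.int -> (`|denq q| %| 2 ^ k)%N.
Proof.
move=> /floorK; set z := Num.floor _ => hz.
have e : (2 ^ k)%:Z * numq q = z * denq q.
  apply: (@intr_inj rat); rewrite !rmorphM /= hz numqE.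
  by rewrite pmulrn mulrA.
have : (`|denq q| %| `|(z * denq q)%R|)%N by rewrite abszM; apply: dvdn_mull.
rewrite -e abszM Gauss_dvdl //.
by rewrite coprime_sym coprime_num_den.
Qed.

Lemma is_dyadicP (q : rat) :
  reflect (exists k : nat, (2 ^ k)%:R * q \is a Num.int) (is_dyadic q).
Proof.
apply: (iffP idP) => [h|[k /dyadic_den]].
  exists `|denq q|%N.
  case/dvdnP: h => c hc.
  rewrite hc natrM -mulrA.
  have -> : (`|denq q|)%:R * q = (numq q)%:~R.
    by rewrite numqE mulrC pmulrn -[X in _ = _ * X%:~R]absz_denq.
  by rewrite rpredM // ?intr_int // natr_int.
case/(dvdn_pfactor _ _ (isT : prime 2)) => m _ hm.
rewrite /is_dyadic hm dvdn_Pexp2l //.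
by apply: ltnW; apply: ltn_expl.
Qed.

Lemma is_dyadic_zmod_closed : GRing.zmod_closed is_dyadic.
Proof.
split; first by apply/is_dyadicP; exists 0%N; rewrite mulr0 rpred0.
move=> x y /is_dyadicP[a ha] /is_dyadicP[b hb]; apply/is_dyadicP.
exists (a + b)%N; rewrite mulrBr; apply: rpredB.
  by rewrite expnD natrM mulrAC rpredM // natr_int.
by rewrite addnC expnD natrM mulrAC rpredM // natr_int.
Qed.

HB.instance Definition _ := GRing.isZmodClosed.Build rat is_dyadic
  is_dyadic_zmod_closed.

Record dyadic := Dyadic { dyval : rat; _ : is_dyadic dyval }.
HB.instance Definition _ := [isSub for dyval].
HB.instance Definition _ := [Choice of dyadic by <:].
HB.instance Definition _ := [SubChoice_isSubZmodule of dyadic by <:].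

Lemma int_dyadic (z : int) : z%:~R \in is_dyadic.
Proof. by apply/is_dyadicP; exists 0%N; rewrite mul1r intr_int. Qed.

Definition dyadic_of_int (z : int) : dyadic := Dyadic (int_dyadic z).

Lemma frac_dyadic (x : dyadic) : (dyval x - (Num.floor (dyval x))%:~R) \in is_dyadic.
Proof. by rewrite rpredB ?int_dyadic //; case: x. Qed.

Definition dfrac (x : dyadic) : dyadic := Dyadic (frac_dyadic x).

Lemma floor_dfrac x : Num.floor (dyval (dfrac x)) == 0.
Proof.
rewrite /= floorDrz ?rpredN ?intr_int // floorN ?intr_int // intrKfloor.
by rewrite subrr.
Qed.

(* Z(2^oo) = Z[1/2]/Z, represented by the dyadic rationals in [0,1) *)
Record prufer2 := Prufer { prval : dyadic; _ : Num.floor (dyval prval) == 0 }.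
HB.instance Definition _ := [isSub for prval].
HB.instance Definition _ := [Choice of prufer2 by <:].

Definition prufer_proj (x : dyadic) : prufer2 := Prufer (floor_dfrac x).

Lemma proj_shift (x y : dyadic) : (exists z : int, dyval x - dyval y = z%:~R) ->
  prufer_proj x = prufer_proj y.
Proof.
case=> z hz; apply: val_inj; apply: val_inj => /=.
have -> : dyval x = dyval y + z%:~R by rewrite -hz addrC subrK.
rewrite floorDrz ?intr_int // intrKfloor rmorphD /= opprD addrACA subrr addr0.
by [].
Qed.

Lemma proj_val (x : dyadic) : exists z : int, dyval (prval (prufer_proj x)) - dyval x = z%:~R.
Proof. by exists (- Num.floor (dyval x)); rewrite /= addrAC subrr add0r rmorphN. Qed.

Lemma proj_id (a : prufer2) : prufer_proj (prval a) = a.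
Proof.
case: a => x hx; apply: val_inj; apply: val_inj => /=.
by rewrite (eqP hx) subr0.
Qed.

Definition pr_add (a b : prufer2) := prufer_proj (prval a + prval b).
Definition pr_opp (a : prufer2) := prufer_proj (- prval a).
Definition pr_zero := prufer_proj 0.

Lemma projDl x y : prufer_proj (prval (prufer_proj x) + y) = prufer_proj (x + y).
Proof.
apply: proj_shift; case: (proj_val x) => z hz; exists z.
by rewrite /= -hz; rewrite opprD addrACA subrr addr0.
Qed.

Lemma projDr x y : prufer_proj (x + prval (prufer_proj y)) = prufer_proj (x + y).
Proof. by rewrite addrC projDl addrC. Qed.

Lemma pr_addA : associative pr_add.
Proof. by move=> a b c; rewrite /pr_add projDl projDr addrA. Qed.
Lemma pr_addC : commutative pr_add.
Proof. by move=> a b; rewrite /pr_add addrC. Qed.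
Lemma pr_add0 : left_id pr_zero pr_add.
Proof. by move=> a; rewrite /pr_add /pr_zero projDl add0r proj_id. Qed.
Lemma pr_addN : left_inverse pr_zero pr_opp pr_add.
Proof. by move=> a; rewrite /pr_add /pr_opp projDl addNr. Qed.

HB.instance Definition _ := GRing.isZmodule.Build prufer2
  pr_addA pr_addC pr_add0 pr_addN.

Local Notation RR := Rdefinitions.R.

Definition proper_norm (G : zmodType) (N : G -> RR) : Prop :=
  [/\ (forall g : G, N g = 0 <-> g = 0),
      (forall g : G, N (- g) = N g),
      (forall g h : G, N (g + h) <= N g + N h) &
      (forall r : RR, exists s : seq G, forall g : G, N g <= r -> g \in s)].

Definition norm_dist (G : zmodType) (N : G -> RR) (g h : G) : RR := N (- g + h).

Definition sum_dist (X Y : Type) (dX : X -> X -> RR) (dY : Y -> Y -> RR)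
  (a b : X * Y) : RR := dX a.1 b.1 + dY a.2 b.2.

Definition coarse_map (X Y : Type) (dX : X -> X -> RR) (dY : Y -> Y -> RR)
  (f : X -> Y) : Prop :=
  forall delta : RR, exists eps : RR, forall x y : X,
    dX x y <= delta -> dY (f x) (f y) <= eps.

Definition bounded_dist (X Y : Type) (dY : Y -> Y -> RR) (f g : X -> Y) : Prop :=
  exists C : RR, forall x : X, dY (f x) (g x) <= C.

Definition coarse_equivalence (X Y : Type) (dX : X -> X -> RR)
  (dY : Y -> Y -> RR) (f : X -> Y) : Prop :=
  coarse_map dX dY f /\
  exists g : Y -> X, [/\ coarse_map dY dX g,
                         bounded_dist dX (fun x => g (f x)) id &
                         bounded_dist dY (fun y => f (g y)) id].

Definition coarsely_split_with (K G Q : zmodType) (i : K -> G) (pi : G -> Q)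
  (NK : K -> RR) : Prop :=
  exists (NG : G -> RR) (NQ : Q -> RR),
    [/\ proper_norm NG, proper_norm NQ &
    exists f : G -> K * Q,
      [/\ coarse_equivalence (norm_dist NG)
            (sum_dist (norm_dist NK) (norm_dist NQ)) f,
          bounded_dist (sum_dist (norm_dist NK) (norm_dist NQ))
            (fun k => f (i k)) (fun k => (k, 0)) &
          bounded_dist (norm_dist NQ) (fun g => (f g).2) pi]].

Definition coarsely_split (K G Q : zmodType) (i : K -> G) (pi : G -> Q) : Prop :=
  exists NK : K -> RR, proper_norm NK /\ coarsely_split_with i pi NK.

From HB Require Import structures.
From mathcomp Require Import all_boot all_order all_algebra.
From mathcomp Require Import Rstruct.
From mathcomp Require Import zify ring lra.
Set Implicit Arguments. Unset Strict Implicit. Unset Printing Implicit Defensive.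
Import Order.TTheory GRing.Theory Num.Theory.
Local Open Scope ring_scope.

(* Every x in Z[1/2] is uniquely floor(x) + r with r a dyadic in [0,1), so
   x |-> (floor x, x mod Z) is a bijection Z[1/2] -> Z x Z(2^oo) sending k to
   (k, 0) and lifting the quotient map.  Let 2^v(x) be the denominator of x;
   v is subadditive and unchanged by adding integers.  Then |x| + v(x) is a proper
   norm on Z[1/2] and v a proper norm on Z(2^oo): there are finitely many
   dyadics of bounded size and bounded denominator.  Since the floor moves
   distances by at most 1, the bijection and its inverse change distances by
   at most an additive constant, hence are coarse. *)

Local Notation RR := Rdefinitions.R.

Lemma bounded_dist_eq (X Y : Type) (dY : Y -> Y -> RR) (f g : X -> Y) :
  (forall y, dY y y = 0) -> f =1 g -> bounded_dist dY f g.
Proof. by move=> dY0 efg; exists 0 => x; rewrite efg dY0. Qed.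

Section CoarseMaps.
Variables (X Y : Type) (dX : X -> X -> RR) (dY : Y -> Y -> RR).

Lemma coarse_map_affine (f : X -> Y) (c : RR) :
  (forall x y, dY (f x) (f y) <= dX x y + c) -> coarse_map dX dY f.
Proof.
move=> hf delta; exists (delta + c) => x y hxy.
by apply: le_trans (hf x y) _; rewrite lerD2r.
Qed.

Lemma cancel_coarse_equivalence (f : X -> Y) (g : Y -> X) :
  (forall x, dX x x = 0) -> (forall y, dY y y = 0) ->
  coarse_map dX dY f -> coarse_map dY dX g -> cancel f g -> cancel g f ->
  coarse_equivalence dX dY f.
Proof.
move=> dX0 dY0 cf cg fK gK; split=> //; exists g.
by split=> //; apply: bounded_dist_eq.
Qed.

End CoarseMaps.

Section ProperNorms.
Variables (G : zmodType) (N : G -> RR).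
Hypothesis N_proper : proper_norm N.

Lemma proper_norm0 : N 0 = 0.
Proof. by case: N_proper => h _ _ _; apply/h. Qed.

Lemma norm_dist_refl (g : G) : norm_dist N g g = 0.
Proof. by rewrite /norm_dist addNr proper_norm0. Qed.

End ProperNorms.

Lemma sum_dist_refl (K Q : zmodType) (NK : K -> RR) (NQ : Q -> RR) :
  proper_norm NK -> proper_norm NQ ->
  forall p, sum_dist (norm_dist NK) (norm_dist NQ) p p = 0.
Proof. by move=> hK hQ p; rewrite /sum_dist !norm_dist_refl // addr0. Qed.

Lemma archi_bound_gt (r : RR) : r < (Num.bound `|r|)%:R.
Proof. exact: le_lt_trans (ler_norm r) (archi_boundP (normr_ge0 r)). Qed.

Definition dyadic_val (q : rat) : nat := logn 2 `|denq q|.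

Lemma dyadic_val_min (q : rat) (k : nat) :
  (2 ^ k)%:R * q \is a Num.int -> (dyadic_val q <= k)%N.
Proof.
move/dyadic_den => h.
by have := dvdn_leq_log 2 (expn_gt0 2 k) h; rewrite pfactorK.
Qed.

Lemma dyadic_valP (q : rat) :
  is_dyadic q -> (2 ^ dyadic_val q)%:R * q \is a Num.int.
Proof.
rewrite /is_dyadic /dyadic_val => /(dvdn_pfactor _ _ (isT : prime 2))[m _ hm].
have -> : (2 ^ logn 2 `|denq q|)%:R = (denq q)%:~R :> rat.
  by rewrite hm pfactorK // -hm -absz_denq.
by rewrite mulrC -numqE intr_int.
Qed.

Lemma dyadic_val_scale (q : rat) (k : nat) : is_dyadic q ->
  (dyadic_val q <= k)%N -> (2 ^ k)%:R * q \is a Num.int.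
Proof.
move=> /dyadic_valP h hk.
by rewrite -(subnK hk) expnD natrM -mulrA rpredM // natr_int.
Qed.

Lemma dyadic_valD (x y : rat) : is_dyadic x -> is_dyadic y ->
  (dyadic_val (x + y) <= dyadic_val x + dyadic_val y)%N.
Proof.
move=> hx hy; apply: dyadic_val_min; rewrite mulrDr rpredD //.
  by apply: dyadic_val_scale; rewrite ?leq_addr.
by apply: dyadic_val_scale; rewrite ?leq_addl.
Qed.

Lemma dyadic_valN (x : rat) : dyadic_val (- x) = dyadic_val x.
Proof. by rewrite /dyadic_val denqN. Qed.

Lemma dyadic_val_int (z : int) : dyadic_val z%:~R = 0%N.
Proof.
by apply/eqP; rewrite -leqn0; apply: dyadic_val_min; rewrite mul1r intr_int.
Qed.

Lemma dyadic_val_eq0 (x : rat) :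
  is_dyadic x -> dyadic_val x = 0%N -> x \is a Num.int.
Proof. by move=> /dyadic_valP + h0; rewrite h0 mul1r. Qed.

Lemma dyadic_valDz (x : rat) (z : int) :
  is_dyadic x -> dyadic_val (x + z%:~R) = dyadic_val x.
Proof.
move=> hx; apply/eqP; rewrite eqn_leq; apply/andP; split.
  by have := dyadic_valD hx (int_dyadic z); rewrite dyadic_val_int addn0.
have := dyadic_valD (rpredD hx (int_dyadic z)) (int_dyadic (- z)).
by rewrite dyadic_val_int addn0 mulrNz addrK.
Qed.

Lemma prufer_projD (x y : dyadic) :
  prufer_proj (x + y) = prufer_proj x + prufer_proj y.
Proof. by rewrite [RHS]/(_ + _) /= /pr_add projDl projDr. Qed.

Lemma prufer_projN (x : dyadic) : prufer_proj (- x) = - prufer_proj x.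
Proof.
rewrite [RHS]/(- _) /= /pr_opp; apply: proj_shift.
case: (proj_val x) => z hz; exists z.
by rewrite /= -hz opprK addrC.
Qed.

Lemma prufer_proj_int (z : int) : prufer_proj (dyadic_of_int z) = 0.
Proof. by apply: (proj_shift (y := 0)); exists z; rewrite subr0. Qed.

Lemma prval_ge0_lt1 (a : prufer2) : 0 <= dyval (prval a) < 1.
Proof. by case: a => x /=; rewrite floor_eq add0r. Qed.

Definition int_ball (M : nat) : seq int :=
  [seq i%:Z - M%:Z | i <- iota 0 (2 * M).+1].

Lemma int_ballP (M : nat) (m : int) : `|m| <= M%:Z -> m \in int_ball M.
Proof.
rewrite ler_norml => /andP[lo hi]; apply/mapP; exists (absz (m + M%:Z)).
  by rewrite mem_iota add0n -ltz_nat gez0_abs; lia.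
by rewrite gez0_abs ?addrK //; lia.
Qed.

Definition dyadic_ball (K M : nat) : seq rat :=
  [seq m%:~R / (2 ^ K)%:R | m <- int_ball M].

Lemma dyadic_ballP (K M : nat) (q : rat) : (2 ^ K)%:R * q \is a Num.int ->
  `|(2 ^ K)%:R * q| <= M%:R -> q \in dyadic_ball K M.
Proof.
move=> /floorK hq hM; apply/mapP; exists (Num.floor ((2 ^ K)%:R * q)).
  by apply: int_ballP; rewrite -(ler_int rat) intr_norm hq.
have h2 : (2 ^ K)%:R != 0 :> rat by rewrite pnatr_eq0 expn_eq0.
by rewrite hq mulrC mulrA mulVf // mul1r.
Qed.

Lemma dyadic_boundedP (r : RR) (q : rat) : is_dyadic q ->
  (dyadic_val q)%:R <= r -> ratr `|q| <= r ->
  q \in dyadic_ball (Num.bound `|r|) (2 ^ Num.bound `|r| * Num.bound `|r|).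
Proof.
move=> hq hv ha; have hK := archi_bound_gt r; set K := Num.bound `|r| in hK *.
have vK : (dyadic_val q <= K)%N.
  by apply: ltnW; rewrite -(ltr_nat RR); apply: le_lt_trans hK.
have aK : `|q| <= K%:R.
  by rewrite -(ler_rat RR) ratr_nat; apply/ltW/(le_lt_trans ha).
apply: dyadic_ballP; first exact: dyadic_val_scale.
by rewrite normrM normr_nat natrM ler_wpM2l.
Qed.

Definition int_norm (k : int) : RR := `|k|%:~R.

Definition dyadic_norm (x : dyadic) : RR :=
  ratr `|dyval x| + (dyadic_val (dyval x))%:R.

Definition prufer_norm (a : prufer2) : RR := (dyadic_val (dyval (prval a)))%:R.

Lemma prufer_norm_proj (x : dyadic) :
  prufer_norm (prufer_proj x) = (dyadic_val (dyval x))%:R.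
Proof.
rewrite /prufer_norm; case: (proj_val x) => z hz.
by rewrite -[dyval _](subrK (dyval x)) hz addrC dyadic_valDz //; case: x {hz}.
Qed.

Lemma int_norm_proper : proper_norm int_norm.
Proof.
split=> [g|g|g h|r].
- rewrite /int_norm; split=> [/eqP|->]; last by rewrite normr0.
  by rewrite intr_eq0 normr_eq0 => /eqP.
- by rewrite /int_norm normrN.
- by rewrite /int_norm -intrD ler_int ler_normD.
- exists (int_ball (Num.bound `|r|)) => k hk; apply: int_ballP.
  have := le_lt_trans hk (archi_bound_gt r).
  by rewrite -[_%:R]/((_%:Z)%:~R) /int_norm ltr_int => /ltW.
Qed.

Lemma dyadic_norm_proper : proper_norm dyadic_norm.
Proof.
have absN x : ratr `|dyval x| <= dyadic_norm x by rewrite lerDl ler0n.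
have valN x : (dyadic_val (dyval x))%:R <= dyadic_norm x.
  by rewrite lerDr ratr_norm normr_ge0.
split=> [g|g|g h|r].
- split=> [g0|->]; last by rewrite /dyadic_norm normr0 rmorph0 (dyadic_val_int 0) add0r.
  apply: val_inj; apply/eqP; rewrite /= -normr_le0 -(ler_rat RR) rmorph0 -g0.
  exact: absN.
- by rewrite /dyadic_norm /= normrN dyadic_valN.
- have e1 : ratr `|dyval g + dyval h| <= ratr `|dyval g| + ratr `|dyval h| :> RR.
    by rewrite -rmorphD ler_rat ler_normD.
  have e2 : (dyadic_val (dyval g + dyval h))%:R
            <= (dyadic_val (dyval g))%:R + (dyadic_val (dyval h))%:R :> RR.
    by rewrite -natrD ler_nat dyadic_valD // (valP g, valP h).
  rewrite /dyadic_norm /=; lra.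
- exists (pmap insub (dyadic_ball (Num.bound `|r|) (2 ^ Num.bound `|r| * Num.bound `|r|))).
  move=> x hx; rewrite mem_pmap_sub; apply: dyadic_boundedP.
  + by case: x {hx}.
  + exact: le_trans (valN x) hx.
  + exact: le_trans (absN x) hx.
Qed.

Lemma prufer_norm_proper : proper_norm prufer_norm.
Proof.
split=> [a|a|a b|r].
- split=> [a0|->]; last by rewrite -(prufer_proj_int 0) prufer_norm_proj (dyadic_val_int 0).
  have /floorK ai : dyval (prval a) \is a Num.int.
    by apply: dyadic_val_eq0; [case: (prval a) | apply/eqP; rewrite -(pnatr_eq0 RR); apply/eqP].
  rewrite -(proj_id a) -(prufer_proj_int 0); congr prufer_proj; apply: val_inj.
  by rewrite /= -ai (eqP (valP a)).
- by rewrite -[a]proj_id -prufer_projN !prufer_norm_proj /= dyadic_valN.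
- rewrite -[a]proj_id -[b]proj_id -prufer_projD !prufer_norm_proj /=.
  by rewrite -natrD ler_nat dyadic_valD // (valP (prval a), valP (prval b)).
- set K := Num.bound `|r|; exists (map prufer_proj (pmap insub (dyadic_ball K (2 ^ K)))).
  move=> a ha; rewrite -(proj_id a); apply: map_f; rewrite mem_pmap_sub.
  have vK : (dyadic_val (dyval (prval a)) <= K)%N.
    by apply: ltnW; rewrite -(ltr_nat RR); apply: le_lt_trans ha (archi_bound_gt r).
  apply: dyadic_ballP; first by apply: dyadic_val_scale => //; case: (prval a).
  have /andP[a0 a1] := prval_ge0_lt1 a.
  by rewrite normrM normr_nat ger0_norm // ler_piMr ?ler0n // ltW.
Qed.

Definition dyadic_split (x : dyadic) : int * prufer2 :=
  (Num.floor (dyval x), prufer_proj x).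

Definition dyadic_merge (p : int * prufer2) : dyadic := dyadic_of_int p.1 + prval p.2.

Lemma dyadic_splitK : cancel dyadic_split dyadic_merge.
Proof. by move=> x; apply: val_inj; rewrite /= addrC subrK. Qed.

Lemma dyadic_mergeK : cancel dyadic_merge dyadic_split.
Proof.
case=> k a; rewrite /dyadic_split /dyadic_merge /=; congr (_, _).
  by rewrite addrC floorDrz ?intr_int // (eqP (valP a)) add0r intrKfloor.
by rewrite prufer_projD prufer_proj_int add0r proj_id.
Qed.

Lemma dyadic_split_int (k : int) : dyadic_split (dyadic_of_int k) = (k, 0).
Proof. by rewrite /dyadic_split prufer_proj_int /= intrKfloor. Qed.

Lemma floor_dist_le (x y : rat) :
  (`|- Num.floor x + Num.floor y|)%:~R <= `|- x + y| + 1.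
Proof.
rewrite intr_norm intrD intrN.
have := floor_le x; have := floorD1_gt x; have := floor_le y; have := floorD1_gt y.
rewrite !intrD; have := ler_norm (- x + y).
have : - (- x + y) <= `|- x + y| by rewrite -normrN ler_norm.
move=> *; rewrite ler_norml; apply/andP; split; lra.
Qed.

Local Notation split_dist := (sum_dist (norm_dist int_norm) (norm_dist prufer_norm)).

Lemma dyadic_split_dist (x y : dyadic) :
  split_dist (dyadic_split x) (dyadic_split y) <= norm_dist dyadic_norm x y + 1.
Proof.
rewrite /norm_dist /sum_dist /= -prufer_projN -prufer_projD prufer_norm_proj.
rewrite /dyadic_norm /int_norm -ratr_int /=.
have := floor_dist_le (dyval x) (dyval y); rewrite -(ler_rat RR) rmorphD rmorph1.
lra.
Qed.

Lemma dyadic_merge_dist (p q : int * prufer2) :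
  norm_dist dyadic_norm (dyadic_merge p) (dyadic_merge q) <= split_dist p q + 1.
Proof.
case: p q => [k a] [l b]; rewrite /norm_dist /sum_dist /dyadic_merge /=.
rewrite -[a]proj_id -[b]proj_id -prufer_projN -prufer_projD prufer_norm_proj !proj_id.
have /andP[a0 a1] := prval_ge0_lt1 a; have /andP[b0 b1] := prval_ge0_lt1 b.
rewrite /dyadic_norm /=.
set pa := dyval (prval a) in a0 a1 *; set pb := dyval (prval b) in b0 b1 *.
have -> : - (k%:~R + pa) + (l%:~R + pb) = (- pa + pb) + (- k + l)%:~R.
  by rewrite intrD intrN; ring.
have hd : - pa + pb \in is_dyadic by rewrite rpredD ?rpredN //; apply: valP.
rewrite dyadic_valDz // /int_norm [X in _ <= X]addrAC lerD2r.
have -> : `|- k + l|%:~R + 1 = ratr (`|- k + l|%:~R + 1) :> RR.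
  by rewrite rmorphD rmorph1 rmorph_int.
rewrite ler_rat; apply: le_trans (ler_normD _ _) _.
rewrite intr_norm addrC lerD2l ler_norml; apply/andP; split; lra.
Qed.

Lemma dyadic_coarsely_split_with :
  coarsely_split_with dyadic_of_int prufer_proj int_norm.
Proof.
have split0 := sum_dist_refl int_norm_proper prufer_norm_proper.
exists dyadic_norm, prufer_norm.
split; [exact: dyadic_norm_proper | exact: prufer_norm_proper |].
exists dyadic_split; split.
- apply: (cancel_coarse_equivalence _ split0 _ _ dyadic_splitK dyadic_mergeK).
  + exact: norm_dist_refl dyadic_norm_proper.
  + exact: coarse_map_affine dyadic_split_dist.
  + exact: coarse_map_affine dyadic_merge_dist.
- exact: bounded_dist_eq split0 dyadic_split_int.
- exact: bounded_dist_eq (norm_dist_refl prufer_norm_proper) _.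
Qed.

Theorem mainTheorem16 :
  coarsely_split dyadic_of_int prufer_proj /\
  coarsely_split_with dyadic_of_int prufer_proj
    (fun k : int => (`|k|%:~R : Rdefinitions.R)).
Proof.
split; last exact: dyadic_coarsely_split_with.
by exists int_norm; split; [exact: int_norm_proper | exact: dyadic_coarsely_split_with].
Qed.
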